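(* Let $q\in\mathcal{X}$ be pathless. Then $E\big(D(q)\big)=B\big(A(q)\big)$ (as elements of $\mathcal{T}[[w]]$).
   Context: Let $\mathbf{k}$ be a commutative ring, $\beta,\alpha\in\mathbf{k}$, $n$ a positive integer; write $[m]=\{1,\dots,m\}$. Let $\mathcal{X}=\mathbf{k}[x_{i,j}\mid 1\le i<j\le n]$ (polynomial ring). A monomial in the $x_{i,j}$ is pathless if there is no triple $1\le i<j<k\le n$ with $x_{i,j}x_{j,k}$ dividing it; a polynomial is pathless if it is a $\mathbf{k}$-linear combination of pathless monomials. Laurent series: for symbols $r_1,\dots,r_n$, a Laurent series over $\mathbf{k}$ is a formal sum $\sum_{a\in\mathbb{Z}^n}\lambda_a r_1^{a_1}\cdots r_n^{a_n}$ ($\lambda_a\in\mathbf{k}$) for which there is $d\in\mathbb{Z}$ with $\lambda_a=0$ whenever some $a_i<d$. Let $\mathcal{Q}$ be the $\mathbf{k}$-algebra of such series with the usual multiplication and coefficientwise (product) topology, $\mathbf{k}$ discrete. For $i\in[n]$ put $q_i=r_ir_{i+1}\cdots r_n$; every Laurent monomial is uniquely of the form $q_1^{a_1}\cdots q_n^{a_n}$, $a\in\mathbb{Z}^n$, so every element of $\mathcal{Q}$ is uniquely an infinite sum $\sum_a\mu_a q_1^{a_1}\cdots q_n^{a_n}$; for $i<j$, $1-q_i/q_j=1-r_i\cdots r_{j-1}$ is invertible. Let $A:\mathcal{X}\to\mathcal{Q}$ be the $\mathbf{k}$-algebra homomorphism with $A(x_{i,j})=-\dfrac{q_i+\beta+\alpha/q_j}{1-q_i/q_j}$.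 Let $\mathcal{T}=\mathbf{k}[[t_1,\dots,t_n]]$ and $\mathcal{T}[[w]]$ the formal power series ring in a further indeterminate $w$ over $\mathcal{T}$ (coefficientwise topology). Let $B:\mathcal{Q}\to\mathcal{T}[[w]]$ be the continuous $\mathbf{k}$-linear map $B\big(\sum_a\mu_a q_1^{a_1}\cdots q_n^{a_n}\big)=\sum_a\mu_a\prod_{i:\,a_i>0}t_i^{a_i}\prod_{i:\,a_i<0}w^{-a_i}$ (convergent since each monomial in $t_1,\dots,t_n,w$ arises from only finitely many $a$); $B$ is in general not multiplicative. Let $\mathcal{T}'=\mathbf{k}[t_1,\dots,t_{n-1}]\subseteq\mathcal{T}$, so $\mathcal{T}'[[w]]\subseteq\mathcal{T}[[w]]$; let $D:\mathcal{X}\to\mathcal{T}'$ be the $\mathbf{k}$-algebra homomorphism with $D(x_{i,j})=t_i$, and $E:\mathcal{T}'\to\mathcal{T}'[[w]]$ the $\mathbf{k}$-algebra homomorphism with $E(t_i)=-\dfrac{t_i+\beta+\alpha w}{1-t_iw}$. *)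

From HB Require Import structures.
From mathcomp Require Import all_boot all_order all_algebra.
Set Implicit Arguments. Unset Strict Implicit. Unset Printing Implicit Defensive.
Import Order.TTheory GRing.Theory Num.Theory.
Local Open Scope ring_scope.

(* Indices 1..n of the paper are 'I_n here (0-based). *)

Section Defs.
Variables (R : comPzRingType) (n : nat) (beta alpha : R).

(* A monomial prod_{i<j} x_{i,j}^(e i j) is given by an exponent function
   e (entries with i >= j are ignored); a polynomial is given as a finite
   R-linear combination of monomials (list of (coefficient, exponent)). *)
Definition xmono := 'I_n -> 'I_n -> nat.
Definition xpoly := seq (R * xmono).

Definition pathless_mono (e : xmono) : bool :=
  [forall i : 'I_n, forall j : 'I_n, forall l : 'I_n,
     ~~ [&& (i < j)%N, (j < l)%N, (0 < e i j)%N & (0 < e j l)%N]].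

(* lco b = coefficient of r^b; lb is a lower bound d: lco b = 0 whenever
   some b_k < d (invariant maintained by all constructions below). *)
Record laur := Laur { lb : int; lco : ('I_n -> int) -> R }.

Definition qzero : laur := Laur 0 (fun _ => 0).
Definition qone : laur := Laur 0 (fun b => if [forall k, b k == 0] then 1 else 0).
Definition qadd (F G : laur) : laur :=
  Laur (if lb F <= lb G then lb F else lb G) (fun b => lco F b + lco G b).
Definition qscale (c : R) (F : laur) : laur := Laur (lb F) (fun b => c * lco F b).
(* Cauchy product: the a with a_k >= lb F and c_k - a_k >= lb G form a
   finite box. *)
Definition qmul (F G : laur) : laur :=
  Laur (lb F + lb G) (fun c =>
    let M := (\max_(k < n) absz (c k - lb F - lb G)%R)%N in
    \sum_(t : {ffun 'I_n -> 'I_M.+1} |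
            [forall k, lb G <= c k - (lb F + (t k)%:Z)])
      lco F (fun k => lb F + (t k)%:Z) * lco G (fun k => c k - (lb F + (t k)%:Z))).
Definition qpow (F : laur) (m : nat) : laur := iter m (qmul F) qone.

Definition qmon (e : 'I_n -> int) : laur :=
  Laur (- ((\sum_(k < n) absz (e k))%N)%:Z)
       (fun b => if [forall k, b k == e k] then 1 else 0).
(* q_i = r_i ... r_n  and  1/q_j *)
Definition q_exp (i : 'I_n) : 'I_n -> int := fun k => if (i <= k)%N then 1 else 0.
Definition qinv_exp (j : 'I_n) : 'I_n -> int := fun k => if (j <= k)%N then -1 else 0.

(* (1 - q_i/q_j)^{-1} = (1 - r_i...r_{j-1})^{-1} = sum_{m>=0} (r_i...r_{j-1})^m *)
Definition geomA (i j : 'I_n) : laur :=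
  Laur 0 (fun b =>
    if [forall k : 'I_n, b k == (if (i <= k < j)%N then b i else 0)] && (0 <= b i)
    then 1 else 0).
Definition numA (i j : 'I_n) : laur :=
  qscale (-1) (qadd (qmon (q_exp i))
                    (qadd (qscale beta qone) (qscale alpha (qmon (qinv_exp j))))).
Definition Ax (i j : 'I_n) : laur := qmul (numA i j) (geomA i j).

Definition A_mono (e : xmono) : laur :=
  \big[qmul/qone]_(i < n) \big[qmul/qone]_(j < n | (i < j)%N) qpow (Ax i j) (e i j).
Definition A_poly (p : xpoly) : laur :=
  foldr (fun ce acc => qadd (qscale ce.1 (A_mono ce.2)) acc) qzero p.

(* coefficient of q_1^{a_1}...q_n^{a_n}: this is r^b with b_k = a_1+...+a_k *)
Definition qcoef (F : laur) (a : 'I_n -> int) : R :=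
  lco F (fun k => \sum_(l < n | (l <= k)%N) a l).

(* ps u m = coefficient of t^u w^m *)
Definition ps := ('I_n -> nat) -> nat -> R.

(* the map B : Q -> T[[w]]: the q-exponent a with t^u w^m is
   a_k = u_k - s_k where s_k > 0 only if u_k = 0 and sum_k s_k = m *)
Definition B (F : laur) : ps := fun u m =>
  \sum_(s : {ffun 'I_n -> 'I_m.+1} |
          ((\sum_(k < n) (s k : nat))%N == m) && [forall k, (0 < s k)%N ==> (u k == 0%N)])
     qcoef F (fun k => (u k)%:Z - (s k : nat)%:Z).

Definition pszero : ps := fun _ _ => 0.
Definition psone : ps := fun u m => if [forall k, u k == 0%N] && (m == 0%N) then 1 else 0.
Definition psadd (f g : ps) : ps := fun u m => f u m + g u m.
Definition psscale (c : R) (f : ps) : ps := fun u m => c * f u m.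
Definition psmul (f g : ps) : ps := fun u m =>
  let U := (\max_(k < n) u k)%N in
  \sum_(t : {ffun 'I_n -> 'I_U.+1} | [forall k, (t k <= u k)%N])
    \sum_(l < m.+1) f (fun k => t k : nat) l * g (fun k => (u k - t k)%N) (m - l)%N.
Definition pspow (f : ps) (m : nat) : ps := iter m (psmul f) psone.

Definition tpoly := seq (R * ('I_n -> nat)).
(* D(x_{i,j}) = t_i: the monomial prod x_{i,j}^{e i j} goes to prod_i t_i^{sum_{j>i} e i j} *)
Definition D_poly (p : xpoly) : tpoly :=
  [seq (ce.1, fun i : 'I_n => (\sum_(j < n | (i < j)%N) ce.2 i j)%N) | ce <- p].

(* -(t_i + beta + alpha w) *)
Definition numE (i : 'I_n) : ps := fun u m =>
  - ((if [forall k, u k == (k == i : nat)] && (m == 0%N) then 1 else 0)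
     + (if [forall k, u k == 0%N] && (m == 0%N) then beta else 0)
     + (if [forall k, u k == 0%N] && (m == 1%N) then alpha else 0)).
(* (1 - t_i w)^{-1} = sum_m t_i^m w^m *)
Definition geomE (i : 'I_n) : ps := fun u m =>
  if [forall k, u k == (if k == i then m else 0%N)] then 1 else 0.
Definition Et (i : 'I_n) : ps := psmul (numE i) (geomE i).

Definition E_poly (p : tpoly) : ps :=
  foldr (fun cv acc => psadd (psscale cv.1 (\big[psmul/psone]_(i < n) pspow (Et i) (cv.2 i))) acc)
        pszero p.

End Defs.

(* The map [B] is not multiplicative, but it is on series supported in one orthant
   [{a | a_k >= 0 for sg k, a_k <= 0 otherwise}] of exponents of [q]: there
   [q^a] is sent to [t^u w^m] with [u_k = a_k] for [sg k] and [m = sum_(~~ sg k) -a_k],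
   a monoid morphism, so [B] is the pushforward of coefficients along it and turns
   Cauchy products into products in [T[[w]]].  The factor [A(x_{i,j})], namely
   [-(q_i + beta + alpha q_j^-1) * sum_c (q_i / q_j)^c], lies in such an orthant as soon
   as [sg i] and [~~ sg j], and [B] maps it to [E(t_i)].  For a pathless monomial take
   [sg k] := "no variable [x_{l,k}] occurs": every occurring [x_{i,j}] then has
   [sg i] and [~~ sg j], so [B] is multiplicative on the whole product [A(monomial)],
   which therefore goes to [E(D(monomial))]; linearity of [B] finishes. *)

From mathcomp Require Import all_boot all_order all_algebra.
From mathcomp Require Import zify.
From Stdlib Require Import FunctionalExtensionality.
Import Order.TTheory GRing.Theory Num.Theory.
Set Implicit Arguments. Unset Strict Implicit. Unset Printing Implicit Defensive.
Local Open Scope ring_scope.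

(* [lia] may see two applications of the same finite function at differently
   elaborated types as distinct atoms; generalizing them first avoids this. *)
Ltac ffun_lia :=
  repeat match goal with |- context [@fun_of_fin _ _ _ ?f ?j] =>
    let z := fresh "z" in move: (fun_of_fin f j) => z; simpl in z end;
  lia.

Section SeqSums.
Variables (T : eqType) (R : nmodType).

Lemma eq_big_uniq_supp (s1 s2 : seq T) (F : T -> R) :
  uniq s1 -> uniq s2 -> {in [pred x | F x != 0], s1 =i s2} ->
  \sum_(x <- s1) F x = \sum_(x <- s2) F x.
Proof.
move=> u1 u2 E; apply: perm_big_supp; apply: uniq_perm; rewrite ?filter_uniq // => x.
by rewrite !mem_filter; case: (boolP (F x != 0)) => // /E.
Qed.

Lemma big_pred1_seq (s : seq T) x0 (F : T -> R) :
  uniq s -> \sum_(x <- s | x == x0) F x = if x0 \in s then F x0 else 0.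
Proof.
elim: s => [|y s IH] /=; first by rewrite big_nil.
move=> /andP[ys us]; rewrite big_cons IH // in_cons.
by case: (eqVneq y x0) => [<-|] //=; rewrite (negbTE ys) addr0.
Qed.

End SeqSums.

Section Convolution.
Variable J : finType.
Local Notation vec := {ffun J -> nat}.

Definition box K : seq vec :=
  [seq [ffun j => nat_of_ord (t j)] | t : {ffun J -> 'I_K.+1} <- enum {ffun J -> 'I_K.+1}].

Lemma box_uniq K : uniq (box K).
Proof.
rewrite map_inj_uniq ?enum_uniq // => t t' /ffunP E; apply/ffunP => j.
by apply: val_inj; move: (E j); rewrite !ffunE.
Qed.

Lemma mem_box K x : (x \in box K) = [forall j, x j <= K]%N.
Proof.
apply/mapP/forallP => [[t _ ->] j|H]; first by rewrite ffunE -ltnS.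
exists [ffun j => inord (x j) : 'I_K.+1]; first by rewrite mem_enum.
by apply/ffunP => j; rewrite !ffunE inordK // ltnS.
Qed.

Definition vleq (x y : vec) := [forall j, x j <= y j]%N.
Definition vaddn (x y : vec) : vec := [ffun j => x j + y j]%N.
Definition vsubn (x y : vec) : vec := [ffun j => x j - y j]%N.
Definition vmax (x : vec) := (\max_j x j)%N.

Lemma le_vmax (x : vec) j : (x j <= vmax x)%N.
Proof. exact: leq_bigmax. Qed.

Lemma vaddKn (x y : vec) : vsubn (vaddn x y) x = y.
Proof. by apply/ffunP => j; rewrite !ffunE addKn. Qed.

Lemma vsubnDA (w x y : vec) : vsubn w (vaddn x y) = vsubn (vsubn w x) y.
Proof. by apply/ffunP => j; rewrite !ffunE subnDA. Qed.

Lemma vleq_bounded (x w : vec) K :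
  vleq x w -> (forall j, w j <= K)%N -> forall j, (x j <= K)%N.
Proof. by move=> /forallP H HK j; exact: leq_trans (H j) (HK j). Qed.

Lemma vsubn_bounded (x w : vec) K :
  (forall j, w j <= K)%N -> forall j, (vsubn w x j <= K)%N.
Proof. by move=> HK j; rewrite ffunE; exact: leq_trans (leq_subr _ _) (HK j). Qed.

Lemma big_box_shift (R : nmodType) K x (P : pred vec) (F : vec -> R) :
  (forall y, P (vaddn x y) -> forall j, (x j + y j <= K)%N) ->
  \sum_(p <- box K | P p && vleq x p) F p = \sum_(y <- box K | P (vaddn x y)) F (vaddn x y).
Proof.
move=> HK; rewrite -[RHS]big_filter -(big_map (vaddn x) xpredT) big_mkcond.
rewrite [RHS](eq_big_seq (fun p => if P p && vleq x p then F p else 0)); last first.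
  move=> p /mapP[y]; rewrite mem_filter => /andP[Py _] -> /=.
  by rewrite Py ifT //; apply/forallP => j; rewrite ffunE leq_addr.
apply: eq_big_uniq_supp; rewrite ?box_uniq ?map_inj_uniq ?filter_uniq ?box_uniq //.
  by move=> y y' /ffunP E; apply/ffunP => j; move: (E j); rewrite !ffunE => /addnI.
move=> p; rewrite inE; case: ifP => [/andP[Pp /forallP lxp] _|]; last by rewrite eqxx.
have Ep : p = vaddn x (vsubn p x) by apply/ffunP => j; rewrite !ffunE subnKC.
have Hb := HK _ (eq_ind _ P Pp _ Ep).
apply/idP/mapP.
  move=> _; exists (vsubn p x) => //; rewrite mem_filter -Ep Pp mem_box.
  by apply/forallP => j; move: (Hb j); rewrite ffunE; lia.
move=> _; rewrite mem_box; apply/forallP => j.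
by move: (Hb j) (lxp j); rewrite ffunE; ffun_lia.
Qed.

Variable R : pzSemiRingType.

Definition conv_box K (f g : vec -> R) (w : vec) :=
  \sum_(x <- box K | vleq x w) f x * g (vsubn w x).
Definition conv (f g : vec -> R) (w : vec) := conv_box (vmax w) f g w.

Lemma conv_boxE K (f g : vec -> R) (w : vec) :
  (forall j, w j <= K)%N -> conv f g w = conv_box K f g w.
Proof.
move=> HK; rewrite /conv /conv_box big_mkcond [RHS]big_mkcond.
apply: eq_big_uniq_supp; rewrite ?box_uniq // => x; rewrite inE.
case: ifP => [lxw _|]; last by rewrite eqxx.
by rewrite !mem_box; apply/forallP/forallP => _ j;
  [exact: vleq_bounded lxw HK j | exact: vleq_bounded lxw (@le_vmax w) j].
Qed.

Lemma conv_assoc (f g h : vec -> R) (w : vec) :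
  conv (conv f g) h w = conv f (conv g h) w.
Proof.
set K := vmax w; have HK := @le_vmax w.
rewrite !(conv_boxE _ _ HK) /conv_box.
under eq_bigr => p lpw do rewrite (conv_boxE _ _ (vleq_bounded lpw HK)) /conv_box mulr_suml.
rewrite (exchange_big_dep (fun x => vleq x w)) /=; last first.
  by move=> p x /forallP H1 /forallP H2; apply/forallP => j; exact: leq_trans (H2 j) (H1 j).
apply: eq_bigr => x /forallP lxw.
rewrite (conv_boxE _ _ (vsubn_bounded x HK)) /conv_box mulr_sumr.
rewrite (@big_box_shift _ K x (fun p => vleq p w)); last first.
  by move=> y /vleq_bounded/(_ HK) H j; move: (H j); rewrite ffunE.
apply: eq_big => [y|y _]; last by rewrite vaddKn vsubnDA mulrA.
by apply/forallP/forallP => H j; move: (H j) (lxw j); rewrite !ffunE; lia.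
Qed.

Definition dirac0 : vec -> R := fun x => if [forall j, x j == 0%N] then 1 else 0.

Lemma conv1 (g : vec -> R) (w : vec) : conv dirac0 g w = g w.
Proof.
set z : vec := [ffun _ => 0%N].
have Ez (x : vec) : [forall j, x j == 0%N] = (x == z).
  apply/forallP/eqP => [H|-> j]; last by rewrite ffunE.
  by apply/ffunP => j; rewrite ffunE; apply/eqP.
rewrite /conv /conv_box big_mkcond.
rewrite (eq_bigr (fun x => if x == z then g (vsubn w x) else 0)); last first.
  move=> x _; rewrite /dirac0 Ez; case: eqP => [->|_]; last by rewrite mul0r if_same.
  by rewrite mul1r ifT //; apply/forallP => j; rewrite ffunE.
rewrite -big_mkcond big_pred1_seq ?box_uniq // mem_box ifT; last first.
  by apply/forallP => j; rewrite ffunE.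
by congr g; apply/ffunP => j; rewrite !ffunE subn0.
Qed.

End Convolution.

Section PowerSeries.
Variables (R : comPzRingType) (n : nat).
Local Notation index := {ffun option 'I_n -> nat}.

(* An exponent of [t^u w^m] is the vector on [option 'I_n] with [None] for [w]. *)
Definition ps_index (u : 'I_n -> nat) (m : nat) : index :=
  [ffun o => if o is Some k then u k else m].
Definition ps_vec (f : ps R n) : index -> R := fun x => f (fun k => x (Some k)) (x None).

Lemma ps_vec_index (f : ps R n) u m : ps_vec f (ps_index u m) = f u m.
Proof. by rewrite /ps_vec ffunE; congr f; apply: functional_extensionality => k; rewrite ffunE. Qed.

Lemma ps_index_vec (x : index) : ps_index (fun k => x (Some k)) (x None) = x.
Proof. by apply/ffunP => -[k|]; rewrite ffunE. Qed.

Lemma ps_vec_inj : injective ps_vec.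
Proof.
move=> f g E; do 2 apply: functional_extensionality => ?.
by rewrite -!ps_vec_index E.
Qed.

Lemma big_index_pairs (V : nmodType) (u : 'I_n -> nat) U m K (H : index -> V) :
  (forall k, u k <= U)%N -> (forall o, ps_index u m o <= K)%N ->
  \sum_(t : {ffun 'I_n -> 'I_U.+1} | [forall k, t k <= u k]%N)
     \sum_(l < m.+1) H (ps_index (fun k => t k : nat) l)
  = \sum_(x <- box _ K | vleq x (ps_index u m)) H x.
Proof.
move=> uU HK; pose P (t : {ffun 'I_n -> 'I_U.+1}) := [forall k, t k <= u k]%N.
pose join (tl : {ffun 'I_n -> 'I_U.+1} * nat) := ps_index (fun k => tl.1 k : nat) tl.2.
pose pairs := [seq (t, l) | t <- [seq t <- index_enum _ | P t], l <- iota 0 m.+1].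
transitivity (\sum_(tl <- pairs) H (join tl)).
  rewrite big_allpairs big_filter; apply: eq_bigr => t _.
  by rewrite -[iota 0 m.+1]/(index_iota 0 m.+1) big_mkord.
rewrite -(big_map join xpredT) big_seq_cond.
rewrite (eq_bigr (fun x => if vleq x (ps_index u m) then H x else 0)); last first.
  move=> _ /andP[/mapP[[t l] /allpairsP[[t' l'] /= [Pt' ll' [-> ->]]] ->] _] /=.
  rewrite ifT //; apply/forallP => -[k|]; rewrite !ffunE //.
    by move: Pt'; rewrite mem_filter => /andP[/forallP Pt _]; exact: Pt.
  by move: ll'; rewrite -/(iota 0 m.+1) mem_iota add0n ltnS.
rewrite -big_seq_cond [RHS]big_mkcond; apply: eq_big_uniq_supp; rewrite ?box_uniq //.
  rewrite map_inj_in_uniq; first by apply: allpairs_uniq;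
      rewrite ?filter_uniq ?index_enum_uniq ?iota_uniq // => -[? ?] [? ?] _ _ /= ->.
  move=> [t l] [t' l'] _ _ /ffunP E; congr pair; last by move: (E None); rewrite !ffunE.
  by apply/ffunP => k; apply: val_inj; move: (E (Some k)); rewrite !ffunE.
move=> x; rewrite inE; case: ifP => [/forallP lx _|]; last by rewrite eqxx.
have lxU k : (x (Some k) <= U)%N.
  by apply: leq_trans (lx (Some k)) _; rewrite ffunE uU.
rewrite mem_box (_ : [forall o, x o <= K]%N); last first.
  by apply/forallP => o; exact: leq_trans (lx o) (HK o).
pose t : {ffun 'I_n -> 'I_U.+1} := [ffun k => inord (x (Some k))].
apply/mapP; exists (t, x None); last first.
  by apply/ffunP => -[k|]; rewrite !ffunE // inordK // ltnS.
apply/allpairsP; exists (t, x None); split => //=.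
  rewrite mem_filter mem_index_enum andbT; apply/forallP => k; rewrite ffunE inordK ?ltnS //.
  by move: (lx (Some k)); rewrite ffunE.
by rewrite -/(iota 0 m.+1) mem_iota add0n ltnS; move: (lx None); rewrite ffunE.
Qed.

Lemma psmul_conv (f g : ps R n) u m :
  psmul f g u m = conv (ps_vec f) (ps_vec g) (ps_index u m).
Proof.
rewrite /psmul; set U := (\max_(k < n) u k)%N; set K := maxn U m.
have HK o : (ps_index u m o <= K)%N.
  case: o => [k|]; rewrite ffunE; last exact: leq_maxr.
  exact: leq_trans (leq_bigmax k) (leq_maxl _ _).
rewrite (conv_boxE _ _ HK) /conv_box -(big_index_pairs _ (fun k => leq_bigmax k) HK).
apply: eq_bigr => t _; apply: eq_bigr => l _.
rewrite ps_vec_index; congr (_ * _); rewrite -ps_vec_index; congr ps_vec.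
by apply/ffunP => -[k|]; rewrite !ffunE.
Qed.

Lemma ps_vec_mul (f g : ps R n) : ps_vec (psmul f g) = conv (ps_vec f) (ps_vec g).
Proof. by apply: functional_extensionality => x; rewrite {1}/ps_vec psmul_conv ps_index_vec. Qed.

Lemma ps_vec_one : ps_vec (@psone R n) = @dirac0 _ R.
Proof.
apply: functional_extensionality => x; rewrite /ps_vec /psone /dirac0.
congr (if _ then _ else _); apply/andP/forallP => [[/forallP H1 H2] [k|] //|H].
by split; [apply/forallP => k|]; exact: H.
Qed.

Lemma psmulA : associative (@psmul R n).
Proof.
by move=> f g h; apply: ps_vec_inj; rewrite !ps_vec_mul;
  apply: functional_extensionality => w; rewrite conv_assoc.
Qed.

Lemma psmul1 : left_id (@psone R n) (@psmul R n).
Proof.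
by move=> f; apply: ps_vec_inj; rewrite ps_vec_mul ps_vec_one;
  apply: functional_extensionality => w; rewrite conv1.
Qed.

Lemma pspowD (f : ps R n) a b : pspow f (a + b) = psmul (pspow f a) (pspow f b).
Proof.
elim: a => [|a IH]; first by rewrite add0n /= psmul1.
by rewrite addSn /= IH psmulA.
Qed.

Lemma big_pspow (I : Type) (r : seq I) (P : pred I) (e : I -> nat) (f : ps R n) :
  \big[@psmul R n/@psone R n]_(i <- r | P i) pspow f (e i) = pspow f (\sum_(i <- r | P i) e i)%N.
Proof. by apply: (big_ind2 (fun x k => x = pspow f k)) => // _ a _ b -> ->; rewrite pspowD. Qed.

End PowerSeries.

Section PartialSums.
Variable n : nat.
Implicit Types (a b : 'I_n -> int) (k : 'I_n).

(* [q^a = r^(psum a)], as [q_i = r_i ... r_n]. *)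
Definition psum a : 'I_n -> int := fun k => \sum_(l < n | (l <= k)%N) a l.
Definition pdiff b : 'I_n -> int :=
  fun k => b k - (if (k : nat) is j.+1 then b (insubd k j) else 0).

Lemma psum_nat a k k0 : psum a k = \sum_(0 <= l < k.+1) a (insubd k0 l).
Proof.
rewrite big_mkord (big_ord_widen n (fun i => a (insubd k0 i))) ?ltn_ord //.
by apply: eq_big => [l|l _] /=; [rewrite ltnS | rewrite valKd].
Qed.

Lemma insubd_irr k k0 j : (j < n)%N -> insubd k j = insubd k0 j.
Proof. by move=> jn; apply: val_inj; rewrite !val_insubd jn. Qed.

Lemma psumK : cancel psum pdiff.
Proof.
move=> a; apply: functional_extensionality => k; rewrite /pdiff (psum_nat _ k k).
case Ek: (nat_of_ord k) => [|j]; first by rewrite big_nat1 -Ek valKd subr0.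
have jn : (j < n)%N by rewrite ltnW // -Ek ltn_ord.
rewrite (psum_nat _ _ k) big_nat_recr //= val_insubd jn.
by rewrite addrC addrK -Ek valKd.
Qed.

Lemma pdiffK : cancel pdiff psum.
Proof.
move=> b; apply: functional_extensionality => k; rewrite (psum_nat _ k k).
rewrite (telescope_sumr_eq (fun i => if i is j.+1 then b (insubd k j) else 0)) //.
  by rewrite subr0 valKd.
move=> l /andP[_ lk]; have ln : (l < n)%N by exact: leq_trans lk (ltn_ord k).
rewrite /pdiff val_insubd ln; case: l lk ln => [|l] lk ln //.
by rewrite (@insubd_irr _ k) // ltnW.
Qed.

Lemma psum_inj : injective psum.
Proof. exact: can_inj psumK. Qed.

Lemma psumB a a' k : psum a k - psum a' k = psum (fun l => a l - a' l) k.
Proof. by rewrite /psum sumrB. Qed.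

Lemma eq_psum a d : [forall k, psum a k == psum d k] = [forall k, a k == d k].
Proof.
apply/forallP/forallP => [H k|H k].
  by rewrite (@psum_inj a d) //; apply: functional_extensionality => l; apply/eqP.
by rewrite (_ : a = d) //; apply: functional_extensionality => l; apply/eqP.
Qed.

Lemma psum_eq0 a : [forall k, psum a k == 0] = [forall k, a k == 0].
Proof.
rewrite -(eq_psum a (fun _ => 0)); congr [forall k, _ == _].
by apply: functional_extensionality => k; rewrite /psum big1.
Qed.

End PartialSums.

Section LaurentProduct.
Variables (R : comPzRingType) (n : nat).
Implicit Types F G : laur R n.

Lemma qcoefE F a : qcoef F a = lco F (psum a).
Proof. by []. Qed.

Definition lb_valid F := forall (b : 'I_n -> int) k, b k < lb F -> lco F b = 0.

Lemma lb_valid_qmul F G : lb_valid (qmul F G).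
Proof.
move=> b k /= Hb; rewrite big1 // => t /forallP /(_ k).
by move: Hb (leq0n (t k)); lia.
Qed.

Lemma lb_valid_qadd F G : lb_valid F -> lb_valid G -> lb_valid (qadd F G).
Proof.
move=> vF vG b k /= H; rewrite (vF b k) ?(vG b k) ?addr0 //;
  by move: H; case: ifP => /= h; lia.
Qed.

Lemma lb_valid_qscale c F : lb_valid F -> lb_valid (qscale c F).
Proof. by move=> vF b k /= H; rewrite (vF b k) ?mulr0. Qed.

Lemma lb_valid_qmon (e : 'I_n -> int) : lb_valid (qmon R e).
Proof.
move=> b k /= H; case: ifP => // /forallP/(_ k)/eqP E.
have : (absz (e k) <= \sum_(k < n) absz (e k))%N by rewrite (bigD1 k) //= leq_addr.
by move: H; rewrite E; move: (\sum_(k < n) absz (e k))%N; lia.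
Qed.

Lemma lb_valid_qone : lb_valid (qone R n).
Proof. by move=> b k /= bk; case: ifP => // /forallP/(_ k)/eqP E; rewrite E in bk. Qed.

Lemma lco_qmul_seq F G (c : 'I_n -> int) (s : seq {ffun 'I_n -> int}) :
  lb_valid F -> lb_valid G -> uniq s ->
  (forall b : {ffun 'I_n -> int}, lco F b * lco G (fun k => c k - b k) != 0 -> b \in s) ->
  lco (qmul F G) c = \sum_(b <- s) lco F b * lco G (fun k => c k - b k).
Proof.
move=> vF vG us Hs /=.
set M := (\max_(k < n) absz (c k - lb F - lb G)%R)%N.
pose shift (t : {ffun 'I_n -> 'I_M.+1}) := [ffun k => lb F + (t k)%:Z].
pose h (b : {ffun 'I_n -> int}) := lco F b * lco G (fun k => c k - b k).
transitivity (\sum_(t <- index_enum {ffun 'I_n -> 'I_M.+1}) h (shift t)).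
  rewrite big_mkcond; apply: eq_bigr => t _.
  have -> : (fun k => lb F + (t k)%:Z) = shift t :> ('I_n -> int).
    by apply: functional_extensionality => k; rewrite ffunE.
  rewrite /h; have -> : (fun k => c k - shift t k) = (fun k => c k - (lb F + (t k)%:Z)).
    by apply: functional_extensionality => k; rewrite ffunE.
  case: ifP => // /negbT; rewrite negb_forall => /existsP[k Hk].
  by rewrite (vG _ k) ?mulr0 // ltNge.
rewrite -(big_map shift xpredT h); apply: eq_big_uniq_supp => //.
  rewrite map_inj_uniq ?index_enum_uniq // => t t' /ffunP E; apply/ffunP => k.
  by apply: val_inj; move: (E k); rewrite !ffunE => /addrI [].
move=> b; rewrite inE => hb; rewrite Hs //; apply/mapP.
have bF k : lb F <= b k.
  by rewrite leNgt; apply/negP => /vF E; rewrite /h E mul0r eqxx in hb.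
have bG k : lb G <= c k - b k.
  by rewrite leNgt; apply/negP => /(vG (fun k => c k - b k)) E; rewrite /h E mulr0 eqxx in hb.
have bM k : (absz (b k - lb F) <= M)%N.
  by apply: leq_trans (leq_bigmax k); move: (bF k) (bG k); lia.
exists [ffun k => inord (absz (b k - lb F))]; first by rewrite mem_index_enum.
by apply/ffunP => k; rewrite !ffunE inordK ?ltnS //; move: (bF k); lia.
Qed.

End LaurentProduct.

Section Orthant.
Variables (R : comPzRingType) (n : nat) (sg : 'I_n -> bool).
Implicit Types (F G : laur R n) (a : 'I_n -> int) (v : {ffun 'I_n -> nat}).

Definition in_orthant a := [forall k, if sg k then 0 <= a k else a k <= 0].
Definition orthant_supported F := forall a, ~~ in_orthant a -> qcoef F a = 0.

Lemma in_orthantD a a' :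
  in_orthant a -> in_orthant a' -> in_orthant (fun k => a k + a' k).
Proof.
move=> /forallP H /forallP H'; apply/forallP => k; move: (H k) (H' k).
by case: (sg k) => /=; lia.
Qed.

Lemma lco_qmul_pdiff F G a b :
  lco F b * lco G (fun k => psum a k - b k) =
  qcoef F (pdiff b) * qcoef G (fun k => a k - pdiff b k).
Proof.
rewrite !qcoefE pdiffK; congr (_ * lco G _).
by apply: functional_extensionality => k; rewrite -psumB pdiffK.
Qed.

Lemma orthant_supported_qmul F G :
  lb_valid F -> lb_valid G -> orthant_supported F -> orthant_supported G ->
  orthant_supported (qmul F G).
Proof.
move=> vF vG oF oG a Ha; rewrite qcoefE (@lco_qmul_seq _ _ _ _ _ [::]) ?big_nil //.
move=> b; rewrite lco_qmul_pdiff.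
have [H1|/oF->] := boolP (in_orthant (pdiff b)); last by rewrite mul0r eqxx.
have [H2|/oG->] := boolP (in_orthant (fun k => a k - pdiff b k)); last by rewrite mulr0 eqxx.
move: (in_orthantD H1 H2); rewrite (_ : (fun k => _) = a) ?(negbTE Ha) //.
by apply: functional_extensionality => k; rewrite addrC subrK.
Qed.

(* [signed] identifies [N^n] with the orthant. *)
Definition signed v : {ffun 'I_n -> int} := [ffun k => if sg k then (v k)%:Z else - (v k)%:Z].
Definition ocoef F v := qcoef F (signed v).

Lemma in_orthant_signed v : in_orthant (signed v).
Proof. by apply/forallP => k; rewrite ffunE; case: (sg k); rewrite ?oppr_le0. Qed.

Lemma signed_eq0 v : [forall k, signed v k == 0] = (v == [ffun _ => 0%N]).
Proof.
apply/forallP/eqP => [H|-> k]; last by rewrite !ffunE; case: (sg k).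
by apply/ffunP => k; move: (H k); rewrite !ffunE; case: (sg k); ffun_lia.
Qed.

Lemma signed_inj : injective signed.
Proof.
move=> v v' /ffunP E; apply/ffunP => k; move: (E k); rewrite !ffunE.
by case: (sg k) => /=; ffun_lia.
Qed.

Lemma psum_signed_inj : injective (fun v => [ffun k => psum (signed v) k]).
Proof.
move=> v v' /ffunP E; apply/signed_inj/ffunP => k.
have /psum_inj -> // : psum (signed v) = psum (signed v').
by apply: functional_extensionality => l; move: (E l); rewrite !ffunE.
Qed.

Lemma signed_split v a k :
  in_orthant a -> in_orthant (fun k => signed v k - a k) ->
  (absz (a k) <= v k)%N /\ signed [ffun k => absz (a k)] k = a k.
Proof.
move=> /forallP/(_ k) H1 /forallP/(_ k); rewrite !ffunE.
by case: (sg k) H1 => /= H1 H2; split; move: H1 H2; ffun_lia.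
Qed.

Lemma ocoef_qmul F G :
  lb_valid F -> lb_valid G -> orthant_supported F -> orthant_supported G ->
  ocoef (qmul F G) = conv (ocoef F) (ocoef G).
Proof.
move=> vF vG oF oG; apply: functional_extensionality => v.
rewrite /ocoef qcoefE /conv /conv_box.
rewrite (@lco_qmul_seq _ _ _ _ _
  [seq [ffun k => psum (signed v1) k] | v1 <- box _ (vmax v) & vleq v1 v]) //.
- rewrite big_map big_filter; apply: eq_bigr => v1 /forallP lv1.
  rewrite !qcoefE; congr (lco F _ * lco G _).
    by apply: functional_extensionality => k; rewrite ffunE.
  apply: functional_extensionality => k; rewrite ffunE psumB; congr psum.
  apply: functional_extensionality => l; rewrite !ffunE; move: (lv1 l).
  by case: (sg l); ffun_lia.
- by rewrite map_inj_uniq ?filter_uniq ?box_uniq //; exact: psum_signed_inj.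
move=> b; rewrite lco_qmul_pdiff.
have [H1|/oF->] := boolP (in_orthant (pdiff b)); last by rewrite mul0r eqxx.
have [H2|/oG->] := boolP (in_orthant (fun k => signed v k - pdiff b k));
  last by rewrite mulr0 eqxx.
move=> _; apply/mapP; exists [ffun k => absz (pdiff b k)].
  rewrite mem_filter mem_box; apply/andP; split; apply/forallP => k; rewrite ffunE;
    have [h _] := signed_split k H1 H2 => //.
  exact: leq_trans h (le_vmax v k).
apply/ffunP => k; rewrite ffunE.
have -> : signed [ffun k => absz (pdiff b k)] = pdiff b :> ('I_n -> int).
  by apply: functional_extensionality => l; have [_ ->] := signed_split l H1 H2.
by rewrite pdiffK.
Qed.

End Orthant.

Section Pushforward.
Variables (n : nat) (sg : 'I_n -> bool).
Local Notation vec := {ffun 'I_n -> nat}.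
Local Notation index := {ffun option 'I_n -> nat}.

(* [B] sends [q^(signed sg v)] to the monomial in [t, w] with exponent [collapse v]. *)
Definition collapse (v : vec) : index :=
  [ffun o => if o is Some k then (if sg k then v k else 0%N) else (\sum_(k | ~~ sg k) v k)%N].

Lemma le_collapse (v : vec) k :
  (v k <= if sg k then collapse v (Some k) else collapse v None)%N.
Proof.
rewrite !ffunE; case: (boolP (sg k)) => //= Sk.
by rewrite (bigD1 k) //= leq_addr.
Qed.

Lemma collapse_bounded (v : vec) (x : index) K :
  collapse v = x -> (forall j, x j <= K)%N -> forall k, (v k <= K)%N.
Proof. by move=> <- HK k; apply: leq_trans (le_collapse v k) _; case: (sg k). Qed.

Lemma collapse_vaddn (v1 v2 : vec) : collapse (vaddn v1 v2) = vaddn (collapse v1) (collapse v2).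
Proof.
apply/ffunP => -[k|]; rewrite !ffunE; first by case: (sg k); rewrite ?ffunE.
by rewrite -big_split; apply: eq_bigr => k _; rewrite ffunE.
Qed.

Lemma collapse0 : collapse [ffun _ => 0%N] = [ffun _ => 0%N].
Proof.
apply/ffunP => -[k|]; rewrite !ffunE; first by case: (sg k); rewrite ?ffunE.
by rewrite big1 // => k _; rewrite ffunE.
Qed.

Variable R : pzSemiRingType.
Implicit Types h : vec -> R.

Definition pushforward h (x : index) :=
  \sum_(v <- box _ (vmax x) | collapse v == x) h v.

Lemma pushforward_boxE h (x : index) K :
  (forall j, x j <= K)%N -> pushforward h x = \sum_(v <- box _ K | collapse v == x) h v.
Proof.
move=> HK; rewrite /pushforward big_mkcond [RHS]big_mkcond.
apply: eq_big_uniq_supp; rewrite ?box_uniq // => v; rewrite inE.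
case: ifP => [/eqP E _|]; last by rewrite eqxx.
by rewrite !mem_box; apply/forallP/forallP => _ k;
  [exact: collapse_bounded E HK k | exact: collapse_bounded E (@le_vmax _ x) k].
Qed.

Lemma pushforward_conv h1 h2 (x : index) :
  pushforward (conv h1 h2) x = conv (pushforward h1) (pushforward h2) x.
Proof.
set K := vmax x; have HK := @le_vmax _ x.
transitivity (\sum_(v1 <- box _ K) \sum_(v2 <- box _ K | collapse (vaddn v1 v2) == x)
                 h1 v1 * h2 v2).
  rewrite (pushforward_boxE _ HK).
  under eq_bigr => v /eqP Ev do rewrite (conv_boxE _ _ (collapse_bounded Ev HK)) /conv_box.
  rewrite (exchange_big_dep xpredT) //=; apply: eq_bigr => v1 _.
  rewrite (@big_box_shift _ _ K v1 (fun v => collapse v == x)); last first.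
    by move=> y /eqP E j; move: (collapse_bounded E HK j); rewrite ffunE.
  by apply: eq_bigr => v2 _; rewrite vaddKn.
rewrite /conv -/K /conv_box.
under [RHS]eq_bigr => p lp do rewrite (pushforward_boxE _ (vleq_bounded lp HK))
  (pushforward_boxE _ (vsubn_bounded p HK)) mulr_suml.
under [RHS]eq_bigr => p _ do under eq_bigr do rewrite mulr_sumr.
rewrite [RHS](exchange_big_dep xpredT) //=; apply: eq_bigr => v1 _.
have [lv|nlv] := boolP (vleq (collapse v1) x); last first.
  rewrite big_pred0 => [|v2]; last first.
    apply/negP => /eqP E; move: nlv; rewrite -E collapse_vaddn => /negP; apply.
    by apply/forallP => j; rewrite [X in (_ <= X)%N]ffunE leq_addr.
  by rewrite big_pred0 // => p; apply/negP => /andP[lp /eqP E]; rewrite E lp in nlv.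
rewrite (eq_bigl (fun p => p == collapse v1)); last first.
  by move=> p; apply/andP/eqP => [[_ /eqP ->]|->].
rewrite big_pred1_seq ?box_uniq // mem_box ifT; last first.
  by apply/forallP => j; exact: vleq_bounded lv HK j.
apply: eq_bigl => v2; rewrite collapse_vaddn; apply/eqP/eqP => [<-|->].
  by rewrite vaddKn.
by apply/ffunP => j; rewrite [LHS]ffunE [vsubn _ _ _]ffunE subnKC //; exact: (forallP lv j).
Qed.

Lemma pushforward_dirac (v0 : vec) (c : R) (x : index) :
  pushforward (fun v => if v == v0 then c else 0) x = if collapse v0 == x then c else 0.
Proof.
rewrite /pushforward -big_mkcondr /=; case: ifP => Hx; last first.
  by rewrite big_pred0 // => v; apply/andP => -[E /eqP E2]; rewrite -E2 E in Hx.
rewrite (eq_bigl (fun v => v == v0)); last by move=> v; apply/andP/eqP => [[_ /eqP]|->].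
rewrite big_pred1_seq ?box_uniq // mem_box ifT //.
by apply/forallP => k; exact: collapse_bounded (eqP Hx) (@le_vmax _ x) k.
Qed.

Lemma pushforwardD h1 h2 x :
  pushforward (fun v => h1 v + h2 v) x = pushforward h1 x + pushforward h2 x.
Proof. exact: big_split. Qed.

Lemma pushforwardZ h c x : pushforward (fun v => c * h v) x = c * pushforward h x.
Proof. by rewrite /pushforward mulr_sumr. Qed.

End Pushforward.

Section BOnOrthants.
Variables (R : comPzRingType) (n : nat) (sg : 'I_n -> bool).
Local Notation index := {ffun option 'I_n -> nat}.
Implicit Types (x : index) (a : {ffun 'I_n -> int}) (F : laur R n).

Lemma sum_not_sg (s : 'I_n -> nat) :
  (forall k, sg k -> s k = 0%N) -> (\sum_(k < n) s k = \sum_(k | ~~ sg k) s k)%N.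
Proof.
by move=> H; rewrite [RHS]big_mkcond; apply: eq_bigr => k _; case: ifPn => // /negPn /H.
Qed.

(* The orthant exponents [a] contributing to the coefficient of [t^u w^m] under [B]. *)
Definition on_fiber x a :=
  [forall k, if sg k then a k == (x (Some k))%:Z else (x (Some k) == 0%N) && (a k <= 0)]
  && ((\sum_(k | ~~ sg k) absz (a k))%N == x None).

Lemma mem_collapse_fiber x a :
  (a \in [seq signed sg v | v <- box _ (vmax x) & collapse sg v == x]) = on_fiber x a.
Proof.
apply/mapP/andP => [[v]|[/forallP Ha /eqP Hs]].
  rewrite mem_filter => /andP[/eqP <- _] ->; split.
    by apply/forallP => k; rewrite !ffunE; case: (sg k) => //=; rewrite oppr_le0.
  by apply/eqP; rewrite ffunE; apply: eq_bigr => k Sk; rewrite ffunE (negbTE Sk) abszN.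
have Ea : collapse sg [ffun k => absz (a k)] = x.
  apply/ffunP => -[k|]; rewrite !ffunE; last first.
    by rewrite -Hs; apply: eq_bigr => k _; rewrite ffunE.
  by move: (Ha k); case: (sg k) => [/eqP -> //|/andP[/eqP -> _]].
exists [ffun k => absz (a k)].
  rewrite mem_filter Ea eqxx mem_box; apply/forallP => k.
  exact: collapse_bounded Ea (@le_vmax _ x) k.
apply/ffunP => k; rewrite !ffunE; move: (Ha k).
by case: (sg k) => [/eqP ->|/andP[_]] //; ffun_lia.
Qed.

Lemma mem_B_fiber x a :
  in_orthant sg a ->
  (a \in [seq [ffun k => (x (Some k))%:Z - (s k : nat)%:Z] |
          s : {ffun 'I_n -> 'I_(x None).+1} <- index_enum _ &
          ((\sum_(k < n) (s k : nat))%N == x None)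
          && [forall k, (0 < s k)%N ==> (x (Some k) == 0%N)]])
  = on_fiber x a.
Proof.
move=> /forallP ao; apply/mapP/andP => [[s]|[/forallP Ha /eqP Hs]].
  rewrite mem_filter => /andP[/andP[/eqP Hs /forallP Hu] _] Ea.
  have Hk k : if sg k then (s k : nat) = 0%N else x (Some k) = 0%N.
    move: (Hu k) (ao k); rewrite Ea ffunE.
    case: (posnP (s k)) => [-> _|sp /eqP ->]; case: (sg k) => //; ffun_lia.
  rewrite Ea; split.
    apply/forallP => k; rewrite ffunE; move: (Hk k) (ao k); rewrite Ea ffunE.
    by case: (sg k) => [->|->] //; ffun_lia.
  apply/eqP; rewrite -[RHS]Hs (@sum_not_sg (fun k => s k : nat)) => [|k Sk]; last first.
    by move: (Hk k); rewrite Sk.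
  by apply: eq_bigr => k Sk; rewrite ffunE; move: (Hk k); rewrite (negbTE Sk) => ->; ffun_lia.
have am k : ~~ sg k -> (absz (a k) <= x None)%N.
  by move=> Sk; rewrite -[x None]Hs (bigD1 k) //= leq_addr.
pose s : {ffun 'I_n -> 'I_(x None).+1} := [ffun k => inord (if sg k then 0%N else absz (a k))].
have sE k : (s k : nat) = if sg k then 0%N else absz (a k).
  by rewrite ffunE inordK //; case: ifPn => // /am; rewrite ltnS.
exists s.
  rewrite mem_filter mem_index_enum andbT; apply/andP; split.
    rewrite (@sum_not_sg (fun k => s k : nat)) => [|k Sk]; last by rewrite sE Sk.
    by rewrite -[X in _ == X]Hs; apply/eqP/eq_bigr => k /negbTE Sk; rewrite sE Sk.
  apply/forallP => k; rewrite sE; move: (Ha k); case: (sg k) => //= /andP[/eqP -> _].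
  by rewrite implybT.
apply/ffunP => k; rewrite ffunE sE; move: (Ha k) (ao k).
by case: (sg k) => [/eqP ->|/andP[/eqP Hu _]]; rewrite ?subr0 // Hu; ffun_lia.
Qed.

Lemma ps_vec_B F : orthant_supported sg F -> ps_vec (B F) = pushforward sg (ocoef sg F).
Proof.
move=> oF; apply: functional_extensionality => x; rewrite /ps_vec /B /pushforward /ocoef.
rewrite -[RHS]big_filter -(big_map (signed sg) xpredT (qcoef F)).
transitivity (\sum_(a <- [seq [ffun k => (x (Some k))%:Z - (s k : nat)%:Z] |
     s : {ffun 'I_n -> 'I_(x None).+1} <- index_enum _ &
     ((\sum_(k < n) (s k : nat))%N == x None)
     && [forall k, (0 < s k)%N ==> (x (Some k) == 0%N)]]) qcoef F a).
  rewrite big_map big_filter; apply: eq_bigr => s _; congr qcoef.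
  by apply: functional_extensionality => k; rewrite ffunE.
apply: eq_big_uniq_supp.
- rewrite map_inj_uniq ?filter_uniq ?index_enum_uniq // => s s' /ffunP E.
  by apply/ffunP => k; apply: val_inj; move: (E k); rewrite !ffunE /=; lia.
- by rewrite map_inj_uniq ?filter_uniq ?box_uniq //; exact: signed_inj.
move=> a; rewrite inE => Ha.
have ao : in_orthant sg a by apply: contraNT Ha => /oF ->.
by rewrite mem_B_fiber // mem_collapse_fiber.
Qed.

End BOnOrthants.

Section Multiplicativity.
Variables (R : comPzRingType) (n : nat) (sg : 'I_n -> bool).
Implicit Types F G : laur R n.

Definition admissible F := lb_valid F /\ orthant_supported sg F.

Lemma admissible_qmul F G : admissible F -> admissible G -> admissible (qmul F G).
Proof.
by move=> [vF oF] [vG oG]; split; [exact: lb_valid_qmul | exact: orthant_supported_qmul].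
Qed.

Lemma B_qmul F G : admissible F -> admissible G -> B (qmul F G) = psmul (B F) (B G).
Proof.
move=> aF aG; have [[vF oF] [vG oG]] := (aF, aG).
apply: ps_vec_inj; rewrite ps_vec_mul (ps_vec_B oF) (ps_vec_B oG).
rewrite (ps_vec_B (admissible_qmul aF aG).2) ocoef_qmul //.
by apply: functional_extensionality => x; rewrite pushforward_conv.
Qed.

Lemma admissible_qone : admissible (qone R n).
Proof.
split; first exact: lb_valid_qone.
move=> a Ha; rewrite qcoefE /= psum_eq0; case: ifP => // /forallP H.
by move: Ha; apply: contraNeq => _; apply/forallP => k; rewrite (eqP (H k)); case: (sg k).
Qed.

End Multiplicativity.

Lemma B_qone (R : comPzRingType) n : B (qone R n) = @psone R n.
Proof.
pose sg : 'I_n -> bool := xpredT.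
apply: ps_vec_inj; rewrite (ps_vec_B (admissible_qone R sg).2) ps_vec_one.
apply: functional_extensionality => x.
rewrite (_ : ocoef sg _ = fun v => if v == [ffun _ => 0%N] then 1 else 0); last first.
  by apply: functional_extensionality => v; rewrite /ocoef qcoefE /= psum_eq0 signed_eq0.
rewrite pushforward_dirac collapse0 /dirac0; congr (if _ then _ else _).
by apply/eqP/forallP => [<- o|H]; rewrite ?ffunE //; apply/ffunP => o; rewrite ffunE (eqP (H o)).
Qed.

Lemma B_qpow (R : comPzRingType) n (sg : 'I_n -> bool) (F : laur R n) k :
  admissible sg F -> admissible sg (qpow F k) /\ B (qpow F k) = pspow (B F) k.
Proof.
move=> aF; elim: k => [|k [ak Bk]] /=; first by split; [exact: admissible_qone | exact: B_qone].
by split; [exact: admissible_qmul | rewrite (B_qmul aF ak) Bk].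
Qed.

Lemma B_big_qmul (R : comPzRingType) n (sg : 'I_n -> bool) (I : Type) (r : seq I) (P : pred I)
    (F : I -> laur R n) (f : I -> ps R n) :
  (forall i, P i -> admissible sg (F i) /\ B (F i) = f i) ->
  admissible sg (\big[@qmul R n/qone R n]_(i <- r | P i) F i) /\
  B (\big[@qmul R n/qone R n]_(i <- r | P i) F i) = \big[@psmul R n/@psone R n]_(i <- r | P i) f i.
Proof.
move=> HF; apply: (big_ind2 (fun G g => admissible sg G /\ B G = g)) => //.
  by split; [exact: admissible_qone | exact: B_qone].
by move=> G g G' g' [aG <-] [aG' <-]; split; [exact: admissible_qmul | exact: B_qmul aG aG'].
Qed.

Section UnitVectors.
Variable n : nat.

Definition deltaz (i : 'I_n) : 'I_n -> int := fun k => if k == i then 1 else 0.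
Definition deltan (i : 'I_n) : {ffun 'I_n -> nat} := [ffun k => (k == i : nat)].

Lemma psum_deltaz (i k : 'I_n) : psum (deltaz i) k = if (i <= k)%N then 1 else 0.
Proof.
rewrite /psum /deltaz -big_mkcondr /=; case: ifP => ik.
  by rewrite (big_pred1 i) // => l; apply/andP/eqP => [[_ /eqP]|->].
by rewrite big_pred0 // => l; apply/andP => -[lk /eqP E]; rewrite -E lk in ik.
Qed.

Lemma q_expE (i : 'I_n) : q_exp i = psum (deltaz i).
Proof. by apply: functional_extensionality => k; rewrite psum_deltaz. Qed.

Lemma qinv_expE (j : 'I_n) : qinv_exp j = psum (fun l => - deltaz j l).
Proof.
apply: functional_extensionality => k.
by rewrite /psum sumrN -/(psum (deltaz j) k) psum_deltaz /qinv_exp; case: ifP.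
Qed.

Variable sg : 'I_n -> bool.

Lemma signed_eq_deltaz (i : 'I_n) v (s : bool) : sg i = s ->
  [forall k, signed sg v k == (if s then deltaz i k else - deltaz i k)] = (v == deltan i).
Proof.
move=> Si; apply/forallP/eqP => [H|-> k].
  apply/ffunP => k; move: (H k) => {H}; rewrite !ffunE /deltaz.
  by case: (eqVneq k i) => [->|_]; rewrite ?Si; case: s {Si}; case: (sg k) => /eqP; ffun_lia.
rewrite !ffunE /deltaz; case: (eqVneq k i) => [->|_]; rewrite ?Si; case: s {Si}; by case: (sg k).
Qed.

Lemma eq_index (x y : {ffun option 'I_n -> nat}) :
  (x == y) = [forall k, x (Some k) == y (Some k)] && (x None == y None).
Proof.
apply/eqP/andP => [->|[/forallP H /eqP H2]]; first by split => //; apply/forallP.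
by apply/ffunP => -[k|] //; apply/eqP.
Qed.

Lemma collapse_deltan (i : 'I_n) x :
  (collapse sg (deltan i) == x) =
  [forall k, x (Some k) == if sg i then (k == i : nat) else 0%N]
  && (x None == if sg i then 0%N else 1%N).
Proof.
rewrite eq_index; congr (_ && _).
  apply: eq_forallb => k; rewrite !ffunE eq_sym; case: (eqVneq k i) => [->|ne] //=.
  by case: (sg k); case: (sg i).
rewrite ffunE big_mkcond (bigD1 i) //= big1 => [|k ne]; last first.
  by rewrite ffunE (negbTE ne); case: ifP.
by rewrite ffunE eqxx addn0 eq_sym; case: (sg i).
Qed.

End UnitVectors.

Section Numerator.
Variables (R : comPzRingType) (n : nat) (beta alpha : R) (i j : 'I_n) (sg : 'I_n -> bool).
Hypotheses (Si : sg i) (Sj : ~~ sg j).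

Lemma lco_numA b : lco (numA beta alpha i j) b =
  -1 * ((if [forall k, b k == q_exp i k] then 1 else 0)
     + (beta * (if [forall k, b k == 0] then 1 else 0)
        + alpha * (if [forall k, b k == qinv_exp j k] then 1 else 0))).
Proof. by []. Qed.

Lemma admissible_numA : admissible sg (numA beta alpha i j).
Proof.
split.
  apply/lb_valid_qscale/lb_valid_qadd; first exact: lb_valid_qmon.
  by apply: lb_valid_qadd; apply: lb_valid_qscale; [exact: lb_valid_qone | exact: lb_valid_qmon].
move=> a Ha; rewrite qcoefE lco_numA q_expE qinv_expE !eq_psum psum_eq0.
have off d : in_orthant sg d -> [forall k, a k == d k] = false.
  move=> Hd; apply/negP => /forallP H; move: Ha; rewrite (_ : a = d) ?Hd //.
  by apply: functional_extensionality => k; apply/eqP.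
have oi : in_orthant sg (deltaz i).
  by apply/forallP => k; rewrite /deltaz; case: (eqVneq k i) => [->|_]; rewrite ?Si //; case: (sg k).
have o0 : in_orthant sg (fun _ => 0) by apply/forallP => k; case: (sg k).
have oj : in_orthant sg (fun l => - deltaz j l).
  apply/forallP => k; rewrite /deltaz; case: (eqVneq k j) => [->|_]; last by rewrite oppr0; case: (sg k).
  by rewrite (negbTE Sj).
by rewrite (off _ oi) (off _ o0) (off _ oj) !mulr0 !addr0 mulr0.
Qed.

Lemma B_numA : B (numA beta alpha i j) = numE beta alpha i.
Proof.
apply: ps_vec_inj; rewrite (ps_vec_B admissible_numA.2).
apply: functional_extensionality => x.
rewrite (_ : ocoef sg (numA beta alpha i j) = fun v =>
   -1 * ((if v == deltan i then 1 else 0) + (beta * (if v == [ffun _ => 0%N] then 1 else 0)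
      + alpha * (if v == deltan j then 1 else 0)))); last first.
  apply: functional_extensionality => v.
  rewrite /ocoef qcoefE lco_numA q_expE qinv_expE !eq_psum psum_eq0 signed_eq0.
  by rewrite -(signed_eq_deltaz v Si) -(signed_eq_deltaz v (negbTE Sj)).
rewrite pushforwardZ !pushforwardD !pushforwardZ !pushforward_dirac collapse0.
rewrite !collapse_deltan Si (negbTE Sj) eq_index /ps_vec /numE mulN1r.
have ifE (c : bool) (y : R) : (if c then y else 0) = y * (if c then 1 else 0).
  by case: c; rewrite ?mulr1 ?mulr0.
rewrite (ifE _ beta) (ifE _ alpha) addrA ffunE [0%N == _]eq_sym.
suff -> : [forall k, [ffun=> 0%N] (Some k) == x (Some k)] = [forall k, x (Some k) == 0%N] by [].
by apply: eq_forallb => k; rewrite ffunE eq_sym.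
Qed.

End Numerator.

Section Geometric.
Variables (R : comPzRingType) (n : nat) (i j : 'I_n) (sg : 'I_n -> bool).
Hypotheses (Si : sg i) (Sj : ~~ sg j) (ij : (i < j)%N).

Let i_neq_j : i != j.
Proof. by rewrite neq_ltn ij. Qed.

Definition geom_exp (c : int) : 'I_n -> int := fun k => c * deltaz i k - c * deltaz j k.
Definition geom_vec (c : nat) : {ffun 'I_n -> nat} :=
  [ffun k => if (k == i) || (k == j) then c else 0%N].

Lemma psum_geom_exp c k : psum (geom_exp c) k = if (i <= k < j)%N then c else 0.
Proof.
rewrite /geom_exp -psumB /psum -!mulr_sumr -/(psum (deltaz i) k) -/(psum (deltaz j) k).
rewrite !psum_deltaz; have [ik|ki] := leqP i k; have [jk|kj] := leqP j k => /=.
- by rewrite subrr.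
- by rewrite mulr1 mulr0 subr0.
- by move: ij ki jk; lia.
- by rewrite !mulr0 subrr.
Qed.

Lemma lco_geomA b : lco (geomA R i j) b =
  if [forall k, b k == psum (geom_exp (b i)) k] && (0 <= b i) then 1 else 0.
Proof. by rewrite /=; do 2 congr (if _ then _ else _); apply: eq_forallb => k; rewrite psum_geom_exp. Qed.

Lemma signed_geom_vec c : signed sg (geom_vec c) = geom_exp c%:Z :> ('I_n -> int).
Proof.
apply: functional_extensionality => k; rewrite !ffunE /geom_exp /deltaz.
case: (eqVneq k i) => [->|ki]; first by rewrite Si (negbTE i_neq_j) mulr1 mulr0 subr0.
case: (eqVneq k j) => [->|kj]; first by rewrite (negbTE Sj) mulr1 mulr0 sub0r.
by rewrite !mulr0 subr0; case: (sg k).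
Qed.

Lemma admissible_geomA : admissible sg (geomA R i j).
Proof.
split.
  move=> b k /= H; case: ifP => // /andP[/forallP/(_ k)/eqP E bi].
  by move: H; rewrite E; case: ifP => _; lia.
move=> a Ha; rewrite qcoefE lco_geomA eq_psum; case: ifP => // /andP[/forallP H c_ge0].
move: Ha; rewrite (_ : a = geom_exp (psum a i)); last first.
  by apply: functional_extensionality => k; apply/eqP.
apply: contraNeq => _; case: (psum a i) c_ge0 => c // _.
by rewrite -signed_geom_vec in_orthant_signed.
Qed.

Lemma ocoef_geomA v : ocoef sg (geomA R i j) v = if v == geom_vec (v i) then 1 else 0.
Proof.
rewrite /ocoef qcoefE lco_geomA eq_psum; congr (if _ then _ else _).
apply/andP/eqP => [[/forallP H _]|E].
  have Ei : psum (signed sg v) i = (v i)%:Z.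
    by move: (H i); rewrite ffunE Si /geom_exp /deltaz eqxx (negbTE i_neq_j) mulr1 mulr0 subr0 => /eqP.
  apply/ffunP => k; move: (H k); rewrite Ei !ffunE /geom_exp /deltaz.
  case: (eqVneq k i) => [->|ki] //=.
  case: (eqVneq k j) => [->|kj] /=; first by rewrite (negbTE Sj) mulr1 mulr0 sub0r => /eqP; ffun_lia.
  by rewrite !mulr0 subr0; case: (sg k) => /eqP; ffun_lia.
have Ee : signed sg v = geom_exp (v i)%:Z :> ('I_n -> int) by rewrite {1}E signed_geom_vec.
have -> : psum (signed sg v) i = (v i)%:Z by rewrite Ee psum_geom_exp leqnn ij.
by split => //; apply/forallP => k; rewrite -Ee.
Qed.

Lemma collapse_geom_vec c :
  collapse sg (geom_vec c) = [ffun o => if o is Some k then (if k == i then c else 0%N) else c].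
Proof.
apply/ffunP => -[k|]; rewrite !ffunE.
  case: (eqVneq k i) => [->|ki]; first by rewrite Si.
  by case: (eqVneq k j) => [->|kj]; [rewrite (negbTE Sj) | case: (sg k)].
rewrite big_mkcond (bigD1 j) //= Sj ffunE eqxx orbT big1 ?addn0 // => k kj.
case: (boolP (sg k)) => //= Sk; rewrite ffunE (negbTE kj) orbF.
by case: (eqVneq k i) => // Eki; rewrite Eki Si in Sk.
Qed.

Lemma B_geomA : B (geomA R i j) = geomE R i.
Proof.
apply: ps_vec_inj; rewrite (ps_vec_B admissible_geomA.2).
apply: functional_extensionality => x; rewrite /pushforward.
rewrite (eq_bigr (fun v => if v == geom_vec (x None) then 1 else 0)); last first.
  move=> v /eqP Hx; rewrite ocoef_geomA; congr (if _ then _ else _).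
  apply/eqP/eqP => E; last by rewrite {2}E ffunE eqxx.
  by rewrite -Hx E collapse_geom_vec ffunE -E.
rewrite -/(pushforward sg _ x) pushforward_dirac /ps_vec /geomE.
congr (if _ then _ else _); rewrite eq_index collapse_geom_vec ffunE eqxx andbT.
by apply: eq_forallb => k; rewrite ffunE eq_sym.
Qed.

End Geometric.

Lemma B_Ax (R : comPzRingType) n (beta alpha : R) (i j : 'I_n) (sg : 'I_n -> bool) :
  sg i -> ~~ sg j -> (i < j)%N ->
  admissible sg (Ax beta alpha i j) /\ B (Ax beta alpha i j) = Et beta alpha i.
Proof.
move=> Si Sj ij; have aN := admissible_numA beta alpha Si Sj.
have aG := admissible_geomA R Si Sj ij.
split; first exact: admissible_qmul.
by rewrite /Ax (B_qmul aN aG) (B_numA _ _ Si Sj) (B_geomA R Si Sj ij).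
Qed.

Section Linearity.
Variables (R : comPzRingType) (n : nat).
Implicit Types F G : laur R n.

Lemma B_qzero u m : B (qzero R n) u m = 0.
Proof. by rewrite /B big1. Qed.

Lemma B_qadd F G u m : B (qadd F G) u m = B F u m + B G u m.
Proof. by rewrite /B -big_split. Qed.

Lemma B_qscale c F u m : B (qscale c F) u m = c * B F u m.
Proof. by rewrite /B mulr_sumr. Qed.

End Linearity.

Definition no_incoming n (e : xmono n) : 'I_n -> bool :=
  fun k => [forall l : 'I_n, (l < k)%N ==> (e l k == 0%N)].

Lemma pathless_no_incoming n (e : xmono n) (i j : 'I_n) :
  pathless_mono e -> (i < j)%N -> (0 < e i j)%N -> no_incoming e i && ~~ no_incoming e j.
Proof.
move=> pe ij eij; apply/andP; split; last first.
  by rewrite negb_forall; apply/existsP; exists i; rewrite ij -lt0n eij.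
apply/forallP => l; apply/implyP => li; rewrite -leqn0 leqNgt; apply/negP => eli.
by move: pe => /forallP/(_ l)/forallP/(_ i)/forallP/(_ j); rewrite li ij eli eij.
Qed.

Lemma B_A_mono (R : comPzRingType) n (beta alpha : R) (e : xmono n) :
  pathless_mono e ->
  B (A_mono beta alpha e) =
  \big[@psmul R n/@psone R n]_(i < n) pspow (Et beta alpha i) (\sum_(j < n | (i < j)%N) e i j)%N.
Proof.
move=> pe; under eq_bigr do rewrite -big_pspow.
apply: (proj2 (@B_big_qmul R n (no_incoming e) _ _ _ _ _ _)) => i _.
apply: B_big_qmul => j ij.
have [->|eij] := posnP (e i j); first by split; [exact: admissible_qone | exact: B_qone].
have /andP[Si Sj] := pathless_no_incoming pe ij eij.
have [aA BA] := B_Ax beta alpha Si Sj ij.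
by have [aP ->] := B_qpow (e i j) aA; rewrite BA.
Qed.

Unset Implicit Arguments.
Theorem corollary3p17 (R : comPzRingType) (n : nat) (beta alpha : R)
  (hn : (0 < n)%N) (q : xpoly R n) (hq : all (fun ce => pathless_mono ce.2) q) :
  forall (u : 'I_n -> nat) (m : nat),
    E_poly beta alpha (D_poly q) u m = B (A_poly beta alpha q) u m.
Proof.
move=> u m; elim: q hq => [|[c e] q IH] /=; first by rewrite B_qzero.
by move=> /andP[pe hq]; rewrite B_qadd B_qscale -IH // (B_A_mono beta alpha pe).
Qed.
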